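(* Let the alternate quantum walk on $\mathbb{Z}^2$ with a single-qubit coin be defined on states $\sum_{x,y\in\mathbb{Z},\,c\in\{0,1\}}\beta_{x,y,c}(t)|x,y,c\rangle$, where one time step is $\hat S_y\hat H\hat S_x\hat H$, with $\hat H=\frac{1}{\sqrt2}\begin{pmatrix}1&1\\1&-1\end{pmatrix}$ acting on the coin, $\hat S_x|i,j,0\rangle=|i-1,j,0\rangle$, $\hat S_x|i,j,1\rangle=|i+1,j,1\rangle$, $\hat S_y|i,j,0\rangle=|i,j-1,0\rangle$, $\hat S_y|i,j,1\rangle=|i,j+1,1\rangle$. Start it at the origin with $\beta_{0,0,0}(0)=1/\sqrt2$, $\beta_{0,0,1}(0)=i/\sqrt2$ (all other amplitudes zero). Let the Grover walk have real amplitudes $\alpha_{x,y,c'}(t)$, $c'\in\{0,1,2,3\}$, evolving by $\alpha_{x,y,0}(t+1)=\sum_{j}G_{0j}\alpha_{x+1,y+1,j}(t)$, $\alpha_{x,y,1}(t+1)=\sum_{j}G_{1j}\alpha_{x+1,y-1,j}(t)$, $\alpha_{x,y,2}(t+1)=\sum_{j}G_{2j}\alpha_{x-1,y+1,j}(t)$, $\alpha_{x,y,3}(t+1)=\sum_{j}G_{3j}\alpha_{x-1,y-1,j}(t)$, where $G=\frac12\begin{pmatrix}-1&1&1&1\\1&-1&1&1\\1&1&-1&1\\1&1&1&-1\end{pmatrix}$, started at the origin with $\alpha_{0,0,0}(0)=1/2$, $\alpha_{0,0,1}(0)=-1/2$, $\alpha_{0,0,2}(0)=-1/2$, $\alpha_{0,0,3}(0)=1/2$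 (all other amplitudes zero). Then for all $t\ge0$ and all $(x,y)\in\mathbb{Z}^2$, \[ \beta_{x,y,0}(t)=(-1)^t e^{i\pi/4}\,[\alpha_{x,y,0}(t)+i\,\alpha_{x,y,2}(t)],\qquad \beta_{x,y,1}(t)=(-1)^t e^{i\pi/4}\,[-\alpha_{x,y,1}(t)+i\,\alpha_{x,y,3}(t)]. \]
   Context: $|x,y,c\rangle=|x,y\rangle_W\otimes|c\rangle_C$ with walker basis states $|x,y\rangle$, $x,y\in\mathbb{Z}$. In the Grover walk, coin states $|0\rangle,|1\rangle,|2\rangle,|3\rangle$ correspond to moves left-down, left-up, right-down, right-up, applied after the coin $G$. *)

From Stdlib Require Import Reals ZArith.
From Coquelicot Require Import Coquelicot.

Local Open Scope C_scope.

(* Coins are encoded by nat: qubit coin in {0,1}, Grover coin in {0,1,2,3}.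
   Values outside the range are given amplitude 0 and never used. *)

Definition qstate := Z -> Z -> nat -> C.

Definition Hcoin (psi : qstate) : qstate := fun x y c =>
  match c with
  | 0%nat => (psi x y 0%nat + psi x y 1%nat) / RtoC (sqrt 2)
  | 1%nat => (psi x y 0%nat - psi x y 1%nat) / RtoC (sqrt 2)
  | _ => 0
  end.

(* S_x |i,j,0> = |i-1,j,0>,  S_x |i,j,1> = |i+1,j,1>  (action on amplitudes) *)
Definition Sx (psi : qstate) : qstate := fun x y c =>
  match c with
  | 0%nat => psi (x + 1)%Z y 0%nat
  | 1%nat => psi (x - 1)%Z y 1%nat
  | _ => 0
  end.

Definition Sy (psi : qstate) : qstate := fun x y c =>
  match c with
  | 0%nat => psi x (y + 1)%Z 0%nat
  | 1%nat => psi x (y - 1)%Z 1%nat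
  | _ => 0
  end.

Definition alt_step (psi : qstate) : qstate := Sy (Hcoin (Sx (Hcoin psi))).

Definition beta0 : qstate := fun x y c =>
  if (Z.eqb x 0 && Z.eqb y 0)%bool then
    match c with
    | 0%nat => 1 / RtoC (sqrt 2)
    | 1%nat => Ci / RtoC (sqrt 2)
    | _ => 0
    end
  else 0.

Definition beta (t : nat) : qstate := Nat.iter t alt_step beta0.

Definition gstate := Z -> Z -> nat -> R.

Definition G (i j : nat) : R := if Nat.eqb i j then (-1/2)%R else (1/2)%R.

Definition Gsum (i : nat) (a : nat -> R) : R :=
  (G i 0 * a 0%nat + G i 1 * a 1%nat + G i 2 * a 2%nat + G i 3 * a 3%nat)%R.

Definition grover_step (a : gstate) : gstate := fun x y c =>
  match c with
  | 0%nat => Gsum 0 (a (x + 1)%Z (y + 1)%Z)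
  | 1%nat => Gsum 1 (a (x + 1)%Z (y - 1)%Z)
  | 2%nat => Gsum 2 (a (x - 1)%Z (y + 1)%Z)
  | 3%nat => Gsum 3 (a (x - 1)%Z (y - 1)%Z)
  | _ => 0%R
  end.

Definition alpha0 : gstate := fun x y c =>
  if (Z.eqb x 0 && Z.eqb y 0)%bool then
    match c with
    | 0%nat => (1/2)%R
    | 1%nat => (-1/2)%R
    | 2%nat => (-1/2)%R
    | 3%nat => (1/2)%R
    | _ => 0%R
    end
  else 0%R.

Definition alpha (t : nat) : gstate := Nat.iter t grover_step alpha0.

Definition e_ipi4 : C := (cos (PI / 4), sin (PI / 4)).

(* The Grover walk started in this state never leaves the subspace on which
   the amplitudes of coins 0, 1 at (x-1,y) cancel those of coins 2, 3 at
   (x+1,y), and dually in the y-direction; the Grover step swaps the two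
   relations.  On that subspace two applications of the Hadamard coin,
   which contribute the factor 1/2, reproduce the Grover coin row by row,
   with an overall sign -1 per step.  Hence the correspondence between the
   two walks, true at time 0 with constant e^{i pi/4}, propagates by
   induction with constant (-1)^t e^{i pi/4}. *)

From Stdlib Require Import Reals ZArith Lra.
From Coquelicot Require Import Coquelicot.

Local Open Scope C_scope.

Definition x_balanced (a : gstate) : Prop := forall u v : Z,
  (a (u - 1)%Z v 0%nat + a (u - 1)%Z v 1%nat
   + a (u + 1)%Z v 2%nat + a (u + 1)%Z v 3%nat = 0)%R.

Definition y_balanced (a : gstate) : Prop := forall u v : Z,
  (a u (v - 1)%Z 0%nat + a u (v - 1)%Z 2%nat
   + a u (v + 1)%Z 1%nat + a u (v + 1)%Z 3%nat = 0)%R.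

Lemma grover_step_x_balanced (a : gstate) :
  y_balanced a -> x_balanced (grover_step a).
Proof.
  intros Hy u v; unfold grover_step, Gsum, G; simpl.
  rewrite Z.sub_add, Z.add_simpl_r.
  specialize (Hy u v); lra.
Qed.

Lemma grover_step_y_balanced (a : gstate) :
  x_balanced a -> y_balanced (grover_step a).
Proof.
  intros Hx u v; unfold grover_step, Gsum, G; simpl.
  rewrite Z.sub_add, Z.add_simpl_r.
  specialize (Hx u v); lra.
Qed.

(* Each pair of initial amplitudes that is summed cancels, so the case split
   on which points are the origin needs no consistency check. *)
Lemma alpha0_balanced : x_balanced alpha0 /\ y_balanced alpha0.
Proof.
  split; intros u v; unfold alpha0;
    repeat match goal with |- context [if ?b then _ else _] => destruct b end;
    lra.
Qed.

Lemma alpha_balanced (t : nat) : x_balanced (alpha t) /\ y_balanced (alpha t).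
Proof.
  induction t as [|t [Hx Hy]].
  - exact alpha0_balanced.
  - split; [apply grover_step_x_balanced | apply grover_step_y_balanced];
      assumption.
Qed.

Lemma x_balanced_coin3 (a : gstate) (x y : Z) : x_balanced a ->
  a (x + 1)%Z y 3%nat =
    (- (a (x - 1)%Z y 0%nat + a (x - 1)%Z y 1%nat + a (x + 1)%Z y 2%nat))%R.
Proof. intros Hx; specialize (Hx x y); lra. Qed.

Lemma Cdiv_sqrt2_sqrt2 (u : C) : u / RtoC (sqrt 2) / RtoC (sqrt 2) = u / 2.
Proof.
  assert (Hsqrt2 : RtoC (sqrt 2) <> 0).
  { intros H; apply (f_equal fst) in H; simpl in H.
    pose proof (sqrt_lt_R0 2 ltac:(lra)); lra. }
  replace (RtoC 2) with (RtoC (sqrt 2) * RtoC (sqrt 2))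
    by (rewrite <- RtoC_mult, sqrt_sqrt by lra; reflexivity).
  field; assumption.
Qed.

Lemma Hcoin_twice_add (u v : C) :
  (u / RtoC (sqrt 2) + v / RtoC (sqrt 2)) / RtoC (sqrt 2) = (u + v) / 2.
Proof.
  rewrite <- Cdiv_sqrt2_sqrt2; unfold Cdiv; ring.
Qed.

Lemma Hcoin_twice_sub (u v : C) :
  (u / RtoC (sqrt 2) - v / RtoC (sqrt 2)) / RtoC (sqrt 2) = (u - v) / 2.
Proof.
  rewrite <- Cdiv_sqrt2_sqrt2; unfold Cdiv; ring.
Qed.

Definition corresponds (w : C) (psi : qstate) (a : gstate) : Prop :=
  forall x y : Z,
    psi x y 0%nat = w * (RtoC (a x y 0%nat) + Ci * RtoC (a x y 2%nat)) /\
    psi x y 1%nat = w * (- RtoC (a x y 1%nat) + Ci * RtoC (a x y 3%nat)).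

Lemma corresponds_init : corresponds e_ipi4 beta0 alpha0.
Proof.
  intros x y; unfold beta0, alpha0, e_ipi4; rewrite cos_PI4, sin_PI4.
  assert (Hsqrt2 : (sqrt 2 * sqrt 2 = 2)%R) by (apply sqrt_sqrt; lra).
  assert (Hpos : (0 < sqrt 2)%R) by (apply sqrt_lt_R0; lra).
  destruct (Z.eqb x 0 && Z.eqb y 0)%bool; split;
    apply injective_projections; simpl; field; lra.
Qed.

Lemma alt_step_corresponds (w : C) (psi : qstate) (a : gstate) :
  x_balanced a -> corresponds w psi a ->
  corresponds (RtoC (-1) * w) (alt_step psi) (grover_step a).
Proof.
  intros Hx Hpsi x y.
  unfold alt_step, Sy, Hcoin, Sx, grover_step, Gsum, G; simpl.
  rewrite !(proj1 (Hpsi _ _)), !(proj2 (Hpsi _ _)),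
    Hcoin_twice_add, Hcoin_twice_sub, !(x_balanced_coin3 _ _ _ Hx).
  destruct w as [wr wi].
  split; apply injective_projections; simpl; field.
Qed.

Theorem theorem1 : forall (t : nat) (x y : Z),
  beta t x y 0%nat =
    ((RtoC (-1)) ^ t * e_ipi4 *
     (RtoC (alpha t x y 0%nat) + Ci * RtoC (alpha t x y 2%nat)))%C /\
  beta t x y 1%nat =
    ((RtoC (-1)) ^ t * e_ipi4 *
     (- RtoC (alpha t x y 1%nat) + Ci * RtoC (alpha t x y 3%nat)))%C.
Proof.
  assert (Hcorr : forall t, corresponds (RtoC (-1) ^ t * e_ipi4) (beta t) (alpha t)).
  { induction t as [|t IH].
    - rewrite Cmult_1_l; exact corresponds_init.
    - simpl; rewrite <- Cmult_assoc.
      apply alt_step_corresponds; [apply alpha_balanced | exact IH]. }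
  intros t x y; exact (Hcorr t x y).
Qed.
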